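(* Let $A$ and $B$ be finite-dimensional Hilbert spaces. For any $\sigma\in\mathrm{S}(A)$, any $\rho\in\mathrm{S}_\sigma(A)$ and any $\mathcal{N}\in\mathrm{TPCP}(A,B)$, the function $\mathrm{TPCP}(B,A)\ni\mathcal{T}\mapsto\Delta_{\mathcal{T},\sigma,\mathcal{N}}(\rho)$, where \[ \Delta_{\mathcal{T},\sigma,\mathcal{N}}(\rho):=D(\rho\|\sigma)-D\bigl(\mathcal{N}(\rho)\|\mathcal{N}(\sigma)\bigr)-D_{\mathbb{M}}\bigl(\rho\,\|\,(\mathcal{T}\circ\mathcal{N})(\rho)\bigr), \] is upper semicontinuous.
   Context: $\mathrm{S}(A)$: density operators on $A$; $\mathrm{TPCP}(A,B)$: quantum channels from $A$ to $B$. $\mathrm{S}_\sigma(A):=\{\rho\in\mathrm{S}(A):\mathrm{supp}(\rho)\subseteq\mathrm{supp}(\sigma)\}$. $D(\rho\|\sigma):=\mathrm{tr}(\rho(\log\rho-\log\sigma))$ if $\mathrm{supp}(\rho)\subseteq\mathrm{supp}(\sigma)$, $+\infty$ otherwise. $D_{\mathbb{M}}(\rho\|\tau):=\sup D(\mathcal{M}(\rho)\|\mathcal{M}(\tau))$ over all finite POVMs $\{M_x\}$ with $\mathcal{M}(\omega)=\sum_x\mathrm{tr}(\omega M_x)|x\rangle\langle x|$. *)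

From mathcomp Require Import all_boot all_order all_algebra.
From mathcomp Require Import complex.
From mathcomp Require Import Rstruct.
From mathcomp Require Import classical_sets constructive_ereal ereal.
From Stdlib Require Import Rpower.

Set Implicit Arguments.
Unset Strict Implicit.
Unset Printing Implicit Defensive.

Import Order.TTheory GRing.Theory Num.Theory.
Local Open Scope ring_scope.
Local Open Scope complex_scope.

Notation R := Rdefinitions.R.
Notation C := (complex R).

Definition mx_adj (p q : nat) (A : 'M[C]_(p, q)) : 'M[C]_(q, p) :=
  (map_mx Num.conj A)^T.

(** Positive semidefinite: <v, A v> >= 0 for all vectors v
    (in the order of C this means "real and nonnegative"). *)
Definition psd (n : nat) (A : 'M[C]_n) : Prop :=
  forall v : 'cV[C]_n, 0 <= (mx_adj v *m A *m v) 0 0.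

Definition density (n : nat) (rho : 'M[C]_n) : Prop :=
  psd rho /\ \tr rho = 1.

(** supp(rho) ⊆ supp(sigma), the support being the range (column space). *)
Definition supp_le (n : nat) (rho sigma : 'M[C]_n) : bool :=
  (rho^T <= sigma^T)%MS.

Definition spectral_dec (n : nat) (A : 'M[C]_n) (Ud : 'M[C]_n * 'rV[R]_n) : Prop :=
  Ud.1 *m mx_adj Ud.1 = 1%:M /\
  A = Ud.1 *m diag_mx (map_mx (fun x : R => x%:C) Ud.2) *m mx_adj Ud.1.

(** Matrix logarithm of a positive semidefinite matrix, taken on its support
    (eigenvalue 0 is mapped to 0), via a chosen spectral decomposition. *)
Definition log_mx (n : nat) (A : 'M[C]_n) : 'M[C]_n :=
  let Ud := xget (1%:M, 0) [set Ud | spectral_dec A Ud] in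
  Ud.1 *m diag_mx (\row_i (if (0 < Ud.2 0 i)%R then ln (Ud.2 0 i) else 0%R)%:C)
       *m mx_adj Ud.1.

Definition relent (n : nat) (rho sigma : 'M[C]_n) : \bar R :=
  if supp_le rho sigma
  then ((@complex.Re R (\tr (rho *m (log_mx rho - log_mx sigma)))) %:E)%E
  else (+oo)%E.

Definition is_povm (n k : nat) (M : 'I_k -> 'M[C]_n) : Prop :=
  (forall x, psd (M x)) /\ \sum_(x < k) M x = 1%:M.

Definition meas_channel (n k : nat) (M : 'I_k -> 'M[C]_n) (omega : 'M[C]_n)
  : 'M[C]_k := diag_mx (\row_x \tr (omega *m M x)).

Definition measured_relent (n : nat) (rho tau : 'M[C]_n) : \bar R :=
  ereal_sup [set r : \bar R | exists (k : nat) (M : 'I_k -> 'M[C]_n),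
     is_povm M /\ r = relent (meas_channel M rho) (meas_channel M tau)].

(** Quantum channels TPCP(C^n, C^m): linear, trace preserving, and
    completely positive (id_k ⊗ T preserves positivity for every k; an
    operator on C^k ⊗ C^n is written as a k x k block matrix). *)
Definition is_channel (n m : nat) (T : 'M[C]_n -> 'M[C]_m) : Prop :=
  [/\ (forall (a : C) (X Y : 'M[C]_n), T (a *: X + Y) = a *: T X + T Y),
      (forall X : 'M[C]_n, \tr (T X) = \tr X) &
      (forall (k : nat) (X : 'I_k -> 'I_k -> 'M[C]_n),
          psd (\mxblock_(i < k, j < k) X i j) ->
          psd (\mxblock_(i < k, j < k) T (X i j)))].

Definition Delta (dA dB : nat) (T : 'M[C]_dB -> 'M[C]_dA) (sigma : 'M[C]_dA)
    (N : 'M[C]_dA -> 'M[C]_dB) (rho : 'M[C]_dA) : \bar R :=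
  (relent rho sigma - relent (N rho) (N sigma)
   - measured_relent rho (T (N rho)))%E.

(** Upper semicontinuity of f on the set TPCP(C^m, C^n) of channels, w.r.t.
    the (finite-dimensional, norm) topology of linear maps: distances are
    measured by the entries of the images of the matrix units E_ij. *)
Definition usc_on_channels (m n : nat) (f : ('M[C]_m -> 'M[C]_n) -> \bar R)
  : Prop :=
  forall T0, is_channel T0 ->
  forall c : R, (f T0 < c%:E)%E ->
  exists2 delta : R, (0 < delta)%R &
    forall T, is_channel T ->
      (forall (i j : 'I_m) (k l : 'I_n),
          `|T (delta_mx i j) k l - T0 (delta_mx i j) k l| < delta%:C) ->
      (f T < c%:E)%E.

From mathcomp Require Import all_boot all_order all_algebra.
From mathcomp Require Import complex spectral sesquilinear.
From mathcomp Require Import Rstruct.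
From mathcomp Require Import classical_sets constructive_ereal ereal.
From mathcomp Require Import algebra_tactics.ring lra.
From Stdlib Require Import Rpower Rtrigo_def Exp_prop.

(* Since supp rho <= supp sigma, D(rho||sigma) is a finite number r.  If
   D(N rho||N sigma) = +oo then Delta is identically -oo; otherwise
   Delta_T < c amounts to D_M(rho||T(N rho)) > r - D(N rho||N sigma) - c, so
   it suffices that T |-> D_M(rho||T(N rho)) is lower semicontinuous.  A
   POVM M witnessing D_M > a keeps witnessing it near T: the outcome
   distribution q_T(x) = tr(T(N rho) M_x) depends Lipschitz-continuously on
   the matrix of T, and the classical relative entropy q |-> D(p||q) is lower
   semicontinuous on nonnegative vectors (each term p_x ln(p_x / q_x) is, and
   it tends to +oo when q_x -> 0 < p_x). *)

Set Implicit Arguments.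
Unset Strict Implicit.
Unset Printing Implicit Defensive.

Import Order.TTheory GRing.Theory Num.Theory.
Local Open Scope ring_scope.
Local Open Scope sesquilinear_scope.

Section PositiveForms.
Variable K : numClosedFieldType.

Definition form n (B : 'M[K]_n) (u v : 'cV[K]_n) : K := (u ^t* *m B *m v) 0 0.

Lemma formDl n (B : 'M[K]_n) u1 u2 v : form B (u1 + u2) v = form B u1 v + form B u2 v.
Proof. by rewrite /form linearD map_mxD !mulmxDl mxE. Qed.

Lemma formDr n (B : 'M[K]_n) u v1 v2 : form B u (v1 + v2) = form B u v1 + form B u v2.
Proof. by rewrite /form mulmxDr mxE. Qed.

Lemma formZl n (B : 'M[K]_n) c u v : form B (c *: u) v = c^* * form B u v.
Proof. by rewrite /form linearZ map_mxZ /= -!scalemxAl mxE. Qed.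

Lemma formZr n (B : 'M[K]_n) c u v : form B u (c *: v) = c * form B u v.
Proof. by rewrite /form -!scalemxAr mxE. Qed.

Lemma form_delta n (B : 'M[K]_n) i j : form B (delta_mx i 0) (delta_mx j 0) = B i j.
Proof.
rewrite /form trmx_delta.
have -> : (delta_mx 0 i : 'rV[K]_n) ^ Num.conj = delta_mx 0 i.
  by apply/matrixP => a b; rewrite !mxE; case: (_ && _); rewrite ?conjC1 ?conjC0.
by rewrite -rowE -colE !mxE.
Qed.

Lemma form_mulmx n (B P : 'M[K]_n) u v :
  form B (P *m u) (P *m v) = form (P^t* *m B *m P) u v.
Proof. by rewrite /form trmx_mul map_mxM !mulmxA. Qed.

Lemma conjC_eq_of_real (a b : K) :
  a + b \is Num.real -> 'i * (a - b) \is Num.real -> a^* = b.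
Proof.
move=> /CrealP; rewrite rmorphD /= => sum_conj /CrealP.
rewrite rmorphM rmorphB /= conjCi mulNr -mulrN => /(mulfI (neq0Ci K)).
rewrite opprB => diff_conj.
have -> : a^* = ((a^* + b^*) - (b^* - a^*)) / 2%:R by field.
by rewrite sum_conj diff_conj; field.
Qed.

Lemma form_real_hermitian n (B : 'M[K]_n) :
  (forall v, form B v v \is Num.real) -> B^t* = B.
Proof.
move=> Breal; apply/matrixP => i j; rewrite !mxE -!form_delta.
set u := delta_mx i 0; set v := delta_mx j 0.
have iiN : - 'i * ('i : K) = 1 by rewrite mulNr mulCii opprK.
apply: conjC_eq_of_real.
  have -> : form B v u + form B u v =
      form B (u + v) (u + v) - form B u u - form B v v.
    by rewrite formDl !formDr; ring.
  by rewrite !rpredB.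
have -> : 'i * (form B v u - form B u v) =
    form B (v + 'i *: u) (v + 'i *: u) - form B v v - form B u u.
  rewrite formDl !formDr !formZl !formZr conjCi mulrA iiN; ring.
by rewrite !rpredB.
Qed.

Lemma trace_mul_form_ge0 n (A B : 'M[K]_n) :
  (forall v, 0 <= form A v v) -> (forall v, 0 <= form B v v) -> 0 <= \tr (A *m B).
Proof.
move=> A_ge0 B_ge0.
have /orthomx_spectralP : B \is normalmx.
  by apply/normalmxP; rewrite form_real_hermitian // => v; apply: ger0_real.
set P := spectralmx B; set d := spectral_diag B.
rewrite invmx_unitary ?spectral_unitarymx // => BE.
have PPt : P *m P^t* = 1%:M by apply/unitarymxP; apply: spectral_unitarymx.
have conj_ge0 M : (forall v, 0 <= form M v v) -> forall i, 0 <= (P *m M *m P^t*) i i.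
  move=> M_ge0 i; rewrite -form_delta -[X in X *m _ *m _](trmxCK P) -form_mulmx.
  exact: M_ge0.
have diagE : P *m B *m P^t* = diag_mx d.
  by rewrite BE !mulmxA PPt mul1mx -mulmxA PPt mulmx1.
rewrite BE mulmxA mxtrace_mulC !mulmxA mul_mx_diag /mxtrace.
apply: sumr_ge0 => i _; rewrite mxE mulr_ge0 ?conj_ge0 //.
by have := conj_ge0 B B_ge0 i; rewrite diagE mxE eqxx mulr1n.
Qed.

End PositiveForms.

Lemma ln_le_subr1 (x : R) : 0 < x -> ln x <= x - 1.
Proof.
move=> /RltP x_gt0; have /RleP := exp_ineq1_le (ln x).
by rewrite exp_ln // RplusE R1E => ?; lra.
Qed.

Lemma ln_sub_le (t s : R) : 0 < t -> 0 < s -> ln t - ln s <= (t - s) / s.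
Proof.
move=> t_gt0 s_gt0.
have -> : ln t - ln s = ln (t / s).
  have [/RltP t_gt0' /RltP s_gt0'] := (t_gt0, s_gt0).
  have /RltP sV_gt0 : 0 < s^-1 by rewrite invr_gt0.
  by rewrite -RinvE -RmultE ln_mult // ln_Rinv // RplusE RoppE.
by rewrite mulrBl divff ?gt_eqF // ln_le_subr1 ?divr_gt0.
Qed.

Lemma ln_ltr (x y : R) : 0 < x -> x < y -> ln x < ln y.
Proof. by move=> /RltP x_gt0 /RltP lt_xy; apply/RltP; apply: ln_increasing. Qed.

Lemma exp_gtr0 (x : R) : 0 < exp x.
Proof. by apply/RltP; apply: exp_pos. Qed.

Local Open Scope complex_scope.

Definition lnpos (r : R) : R := if 0 < r then ln r else 0.

Definition rdiag k (p : 'I_k -> R) : 'M[C]_k := diag_mx (\row_x (p x)%:C).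

Lemma mx_adjE m n (A : 'M[C]_(m, n)) : mx_adj A = A ^t*.
Proof. by rewrite /mx_adj map_trmx. Qed.

Lemma log_mx_rdiag k (p : 'I_k -> R) : log_mx (rdiag p) = rdiag (lnpos \o p).
Proof.
rewrite /log_mx; set Ud := xget _ _.
have : spectral_dec (rdiag p) Ud.
  apply: xgetPex; exists (1%:M, \row_x p x).
  rewrite /spectral_dec /= mx_adjE trmx1 map_mx1 !mulmx1 mul1mx; split=> //.
  by congr diag_mx; apply/rowP => x; rewrite !mxE.
case: Ud => U e [/= UUt pE].
have UtU : mx_adj U *m U = 1%:M by apply: mulmx1C.
(* [U] intertwines [diag e] and [rdiag p], hence any function of them. *)
have intertwine (f : R -> R) :
    U *m diag_mx (map_mx (fun x => (f x)%:C) e) = rdiag (f \o p) *m U.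
  have pU : rdiag p *m U = U *m diag_mx (map_mx (fun x => x%:C) e).
    by rewrite pE -!mulmxA UtU mulmx1.
  apply/matrixP => i j; rewrite mul_mx_diag mul_diag_mx !mxE.
  have /matrixP/(_ i j) := pU; rewrite mul_mx_diag mul_diag_mx !mxE.
  have [->|Uij] := eqVneq (U i j) 0; first by rewrite !mul0r !mulr0.
  move=> pUij /=; have [->] : (p i)%:C = (e 0 j)%:C.
    by apply: (mulIf Uij); rewrite pUij mulrC.
  exact: mulrC.
have -> : \row_i (if 0 < e 0 i then ln (e 0 i) else 0)%:C =
    map_mx (fun x => (lnpos x)%:C) e.
  by apply/rowP => x; rewrite !mxE.
by rewrite intertwine -mulmxA UUt mulmx1.
Qed.

Definition crelent k (p q : 'I_k -> R) : \bar R :=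
  if [forall x, (p x != 0) ==> (q x != 0)]
  then ((\sum_x p x * (lnpos (p x) - lnpos (q x)))%:E)%E else (+oo)%E.

Lemma supp_le_rdiag k (p q : 'I_k -> R) :
  supp_le (rdiag p) (rdiag q) = [forall x, (p x != 0) ==> (q x != 0)].
Proof.
rewrite /supp_le /rdiag !tr_diag_mx.
apply/idP/forallP => [/submxP [D pE] x|supp_pq].
  apply/implyP; apply: contraNneq => qx0.
  have /matrixP/(_ x x) := pE; rewrite mul_mx_diag !mxE eqxx qx0 mulr0 mulr1n.
  by move/(congr1 (@complex.Re _)) => /= ->.
apply/submxP; exists (diag_mx (\row_x ((p x)%:C / (q x)%:C))).
apply/matrixP => i j; rewrite mul_mx_diag !mxE.
have [<-|_] := eqVneq i j; last by rewrite mulr0n mul0r.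
rewrite !mulr1n; have [qi0|qi0] := eqVneq (q i) 0.
  by move: (supp_pq i); rewrite qi0 eqxx implybF negbK => /eqP ->; rewrite mulr0.
by rewrite divfK // eq_complex /= negb_and qi0.
Qed.

Lemma relent_rdiag k (p q : 'I_k -> R) : relent (rdiag p) (rdiag q) = crelent p q.
Proof.
rewrite /relent supp_le_rdiag /crelent; case: ifP => // _.
rewrite !log_mx_rdiag /rdiag -linearB /= mul_diag_mx /mxtrace raddf_sum.
congr (_%:E)%E; apply: eq_bigr => x _.
by rewrite !mxE eqxx mulr1n -rmorphB -rmorphM.
Qed.

Lemma uniform_radius (I : finType) (Q : I -> R) (P : I -> R -> Prop) :
  (forall i, exists2 d, 0 < d & forall t, `|t - Q i| < d -> P i t) ->
  exists2 d, 0 < d & forall i t, `|t - Q i| < d -> P i t.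
Proof.
move=> radius.
have /fin_all_exists [d dP] :
    forall i, exists d, 0 < d /\ forall t, `|t - Q i| < d -> P i t.
  by move=> i; have [d d_gt0 dP] := radius i; exists d.
exists (\big[Num.min/1]_i d i).
  by apply: lt_bigmin => // i _; case: (dP i).
move=> i t near_t; case: (dP i) => _; apply.
exact: lt_le_trans near_t (bigmin_le _ _ _).
Qed.

Lemma crelent_term_lsc (p Q e : R) : 0 <= p -> 0 <= Q -> (p != 0 -> Q != 0) -> 0 < e ->
  exists2 d, 0 < d & forall t, `|t - Q| < d -> 0 <= t ->
    (0 < p -> 0 < t) /\ p * (lnpos p - lnpos Q) - e < p * (lnpos p - lnpos t).
Proof.
move=> p_ge0 Q_ge0 supp_pQ e_gt0.
have [->|p0] := eqVneq p 0.
  by exists 1 => // t _ _; rewrite ltxx !mul0r; split => //; lra.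
have p_gt0 : 0 < p by rewrite lt_def p0.
have Q_gt0 : 0 < Q by rewrite lt_def supp_pQ.
exists (Num.min Q (e * Q / p)); first by rewrite lt_min Q_gt0 !divr_gt0 ?mulr_gt0.
move=> t; rewrite lt_min !ltr_distl => /andP [/andP [t_gt0 _] /andP [_ t_lt]] _.
have {}t_gt0 : 0 < t by lra.
split=> [//|]; rewrite /lnpos p_gt0 t_gt0 Q_gt0.
have : p * (ln t - ln Q) <= p * ((t - Q) / Q).
  by apply: ler_wpM2l; [exact: ltW | exact: ln_sub_le].
have : p * ((t - Q) / Q) < e.
  by rewrite mulrC -ltr_pdivlMr // ltr_pdivrMr // mulrAC; lra.
lra.
Qed.

Lemma crelent_lsc_supp k (p Q : 'I_k -> R) (a : R) :
  (forall x, 0 <= p x) -> (forall x, 0 <= Q x) ->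
  [forall x, (p x != 0) ==> (Q x != 0)] -> (a%:E < crelent p Q)%E ->
  exists2 d, 0 < d & forall q, (forall x, 0 <= q x) ->
    (forall x, `|q x - Q x| < d) -> (a%:E < crelent p q)%E.
Proof.
move=> p_ge0 Q_ge0 suppQ; rewrite /crelent suppQ lte_fin => a_lt.
set S := \sum_x _ in a_lt.
have k1_gt0 : 0 < k%:R + 1 :> R by rewrite ltr_wpDl.
pose e := (S - a) / (k%:R + 1).
have e_gt0 : 0 < e by rewrite divr_gt0 ?subr_gt0.
have [d d_gt0 dP] := uniform_radius (fun x =>
  crelent_term_lsc (p_ge0 x) (Q_ge0 x) (implyP (forallP suppQ x)) e_gt0).
exists d => // q q_ge0 near_q.
have term x := dP x (q x) (near_q x) (q_ge0 x).
have -> : [forall x, (p x != 0) ==> (q x != 0)].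
  apply/forallP => x; apply/implyP => px0.
  by have [q_gt0 _] := term x; rewrite gt_eqF // q_gt0 // lt_def px0 p_ge0.
rewrite lte_fin; apply: lt_le_trans (ler_sum _ (fun x _ => ltW (term x).2)).
rewrite sumrB sumr_const card_ord -/S -mulr_natr.
have : e * (k%:R + 1) = S - a by rewrite mulfVK ?gt_eqF.
rewrite mulrDr mulr1; lra.
Qed.

Lemma crelent_term_ge (p q Q : R) : 0 <= p -> (p != 0 -> 0 < q) -> `|q - Q| < 1 ->
  p * lnpos p - p * Q <= p * (lnpos p - lnpos q).
Proof.
move=> p_ge0 q_gt0 near_q; have [->|p0] := eqVneq p 0; first by rewrite !mul0r subrr.
rewrite mulrBr lerB // ler_wpM2l // /lnpos q_gt0 //.
by have := ln_le_subr1 (q_gt0 p0); move: near_q; rewrite ltr_distl => /andP []; lra.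
Qed.

(* Where [p] charges an outcome on which [Q] vanishes, [- p x0 * ln (q x0)]
   exceeds any bound once [q x0] is small enough. *)
Lemma crelent_lsc_nsupp k (p Q : 'I_k -> R) (a : R) :
  (forall x, 0 <= p x) -> (forall x, 0 <= Q x) ->
  ~~ [forall x, (p x != 0) ==> (Q x != 0)] ->
  exists2 d, 0 < d & forall q, (forall x, 0 <= q x) ->
    (forall x, `|q x - Q x| < d) -> (a%:E < crelent p q)%E.
Proof.
move=> p_ge0 Q_ge0 /forallPn [x0]; rewrite negb_imply negbK => /andP [px0 /eqP Qx0].
have p0_gt0 : 0 < p x0 by rewrite lt_def px0 p_ge0.
set L := \sum_(x | x != x0) (p x * lnpos (p x) - p x * Q x).
set b := (p x0 * lnpos (p x0) - a + L) / p x0.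
exists (Num.min 1 (exp b)); first by rewrite lt_min ltr01 exp_gtr0.
move=> q q_ge0 near_q; rewrite /crelent; case: ifP => [supp_q|_]; last exact: ltry.
have q_gt0 x : p x != 0 -> 0 < q x.
  by move=> px; rewrite lt_def q_ge0 andbT (implyP (forallP supp_q x)).
have near1 x : `|q x - Q x| < 1 by have := near_q x; rewrite lt_min => /andP [].
have others : L <= \sum_(x | x != x0) p x * (lnpos (p x) - lnpos (q x)).
  by apply: ler_sum => x _; apply: crelent_term_ge (p_ge0 x) (q_gt0 x) (near1 x).
have ln_q0 : ln (q x0) < b.
  have := near_q x0; rewrite lt_min Qx0 subr0 ger0_norm // => /andP [_ q0_lt].
  by rewrite -[b]ln_exp; apply: ln_ltr => //; apply: q_gt0.
have : p x0 * lnpos (q x0) < p x0 * b by rewrite /lnpos q_gt0 // ltr_pM2l.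
rewrite [p x0 * b]mulrC divfK ?gt_eqF // lte_fin (bigD1 x0) //= mulrBr.
lra.
Qed.

Lemma crelent_lsc k (p Q : 'I_k -> R) (a : R) :
  (forall x, 0 <= p x) -> (forall x, 0 <= Q x) -> (a%:E < crelent p Q)%E ->
  exists2 d, 0 < d & forall q, (forall x, 0 <= q x) ->
    (forall x, `|q x - Q x| < d) -> (a%:E < crelent p q)%E.
Proof.
move=> p_ge0 Q_ge0; case: (boolP [forall x, (p x != 0) ==> (Q x != 0)]) => suppQ.
  exact: crelent_lsc_supp.
by move=> _; apply: crelent_lsc_nsupp.
Qed.

Lemma psdE n (A : 'M[C]_n) : psd A <-> forall v, 0 <= form A v v.
Proof. by rewrite /psd /form; split=> A_ge0 v; have := A_ge0 v; rewrite mx_adjE. Qed.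

Lemma psd_trace_mul_ge0 n (A B : 'M[C]_n) : psd A -> psd B -> 0 <= \tr (A *m B).
Proof. by move=> /psdE A_ge0 /psdE B_ge0; apply: trace_mul_form_ge0. Qed.

Lemma ge0_ReE (z : C) : 0 <= z -> z = (complex.Re z)%:C.
Proof. by move=> /ger0_real /RRe_real ->. Qed.

Definition born n k (M : 'I_k -> 'M[C]_n) (w : 'M[C]_n) (x : 'I_k) : R :=
  complex.Re (\tr (w *m M x)).

Section Measurement.
Variables (n k : nat) (M : 'I_k -> 'M[C]_n).
Hypothesis M_psd : forall x, psd (M x).

Lemma bornE w x : psd w -> \tr (w *m M x) = (born M w x)%:C.
Proof. by move=> w_psd; apply/ge0_ReE/psd_trace_mul_ge0. Qed.

Lemma born_ge0 w x : psd w -> 0 <= born M w x.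
Proof. by move=> w_psd; rewrite -lecR -bornE ?psd_trace_mul_ge0. Qed.

Lemma relent_meas_channel rho w : psd rho -> psd w ->
  relent (meas_channel M rho) (meas_channel M w) = crelent (born M rho) (born M w).
Proof.
move=> rho_psd w_psd; rewrite -relent_rdiag /meas_channel /rdiag.
by congr relent; congr diag_mx; apply/rowP => x; rewrite !mxE bornE.
Qed.

End Measurement.

Lemma psd_castmx m n (e : m = n) (B : 'M[C]_m) : psd B -> psd (castmx (e, e) B).
Proof. by case: n / e; rewrite castmx_id. Qed.

Section Channel.
Variables (n m : nat) (T : 'M[C]_n -> 'M[C]_m).
Hypothesis T_chan : is_channel T.

Lemma channel0 : T 0 = 0.
Proof.
case: T_chan => T_lin _ _; have := T_lin 1 0 0.
by rewrite !scale1r addr0 => /eqP; rewrite addrC -subr_eq subrr eq_sym => /eqP.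
Qed.

Lemma channelD X Y : T (X + Y) = T X + T Y.
Proof. by case: T_chan => T_lin _ _; have := T_lin 1 X Y; rewrite !scale1r. Qed.

Lemma channelZ a X : T (a *: X) = a *: T X.
Proof.
by case: T_chan => T_lin _ _; have := T_lin a X 0; rewrite !addr0 channel0 addr0.
Qed.

Lemma channel_sum (I : finType) (F : I -> 'M[C]_n) : T (\sum_i F i) = \sum_i T (F i).
Proof. exact: (big_morph T channelD channel0). Qed.

(* Complete positivity at level [k = 1], up to the cast of a 1 x 1 block matrix. *)
Lemma channel_psd X : psd X -> psd (T X).
Proof.
case: T_chan => _ _ T_cp X_psd.
have block_psd : psd (\mxblock_(i < 1, j < 1) X).
  rewrite -(castmxK (big_ord1 _ (fun=> n)) (big_ord1 _ (fun=> n))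
    (\mxblock_(i < 1, j < 1) X)).
  by rewrite -mxEmxblock; apply: psd_castmx.
have /(psd_castmx (big_ord1 _ (fun=> m))) := T_cp 1 (fun _ _ => X) block_psd.
by rewrite -mxEmxblock.
Qed.

End Channel.

Definition l1mx m n (A : 'M[C]_(m, n)) : C := \sum_i \sum_j `|A i j|.

Lemma l1mx_ge0 m n (A : 'M[C]_(m, n)) : 0 <= l1mx A.
Proof. by apply: sumr_ge0 => i _; apply: sumr_ge0. Qed.

Definition channel_dist_lt n m (delta : R) (T T0 : 'M[C]_n -> 'M[C]_m) :=
  forall i j k l, `|T (delta_mx i j) k l - T0 (delta_mx i j) k l| < delta%:C.

Lemma trace_channel_dist_le n m (T T0 : 'M[C]_n -> 'M[C]_m) X M (delta : R) :
  is_channel T -> is_channel T0 -> channel_dist_lt delta T T0 ->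
  `|\tr (T X *m M) - \tr (T0 X *m M)| <= delta%:C * l1mx X * l1mx M.
Proof.
move=> T_chan T0_chan close.
have diffE : T X - T0 X = \sum_i \sum_j X i j *: (T (delta_mx i j) - T0 (delta_mx i j)).
  rewrite {1 2}[X]matrix_sum_delta (channel_sum T_chan) (channel_sum T0_chan) -sumrB.
  apply: eq_bigr => i _; rewrite (channel_sum T_chan) (channel_sum T0_chan) -sumrB.
  by apply: eq_bigr => j _; rewrite (channelZ T_chan) (channelZ T0_chan) scalerBr.
have entry_le a b : `|(T X - T0 X) a b| <= delta%:C * l1mx X.
  rewrite diffE /l1mx mulr_sumr summxE; apply: (le_trans (ler_norm_sum _ _ _)).
  apply: ler_sum => i _; rewrite summxE; apply: (le_trans (ler_norm_sum _ _ _)).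
  rewrite mulr_sumr; apply: ler_sum => j _.
  by rewrite !mxE normrM mulrC ler_wpM2r // ltW.
rewrite -linearB /= -mulmxBl /mxtrace [l1mx M]/l1mx exchange_big /=.
rewrite mulr_sumr; apply: (le_trans (ler_norm_sum _ _ _)); apply: ler_sum => a _.
rewrite mxE mulr_sumr; apply: (le_trans (ler_norm_sum _ _ _)); apply: ler_sum => b _.
by rewrite normrM ler_wpM2r.
Qed.

Lemma born_channel_near n m k (M : 'I_k -> 'M[C]_n) (X : 'M[C]_m)
    (T0 : 'M[C]_m -> 'M[C]_n) (e : R) :
  (forall x, psd (M x)) -> psd X -> is_channel T0 -> 0 < e ->
  exists2 delta, 0 < delta & forall T, is_channel T -> channel_dist_lt delta T T0 ->
    forall x, `|born M (T X) x - born M (T0 X) x| < e.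
Proof.
move=> M_psd X_psd T0_chan e_gt0.
have WC_ge0 : 0 <= l1mx X * \sum_x l1mx (M x).
  by rewrite mulr_ge0 ?l1mx_ge0 // sumr_ge0 // => y _; apply: l1mx_ge0.
have WE := ge0_ReE WC_ge0; set W := complex.Re _ in WE.
have W_ge0 : 0 <= W by rewrite -lecR -WE.
have W1_gt0 : 0 < 1 + W by rewrite ltr_wpDr.
exists (e / (1 + W)); first by rewrite divr_gt0.
move=> T T_chan close x.
have term_le : l1mx X * l1mx (M x) <= W%:C.
  rewrite -WE ler_wpM2l ?l1mx_ge0 // (bigD1 x) //= lerDl.
  by apply: sumr_ge0 => y _; apply: l1mx_ge0.
have dist_le := le_trans (normc_ge_Re _)
  (trace_channel_dist_le X (M x) T_chan T0_chan close).
rewrite raddfB /= -mulrA in dist_le.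
apply: (@le_lt_trans _ _ (e / (1 + W) * W)).
  rewrite -lecR rmorphM /=; apply: (le_trans dist_le).
  by rewrite ler_wpM2l // lecR ltW // divr_gt0.
by rewrite mulrAC ltr_pdivrMr // ltr_pM2l //; lra.
Qed.

Lemma measured_relent_lsc n m (rho : 'M[C]_n) (X : 'M[C]_m)
    (T0 : 'M[C]_m -> 'M[C]_n) (a : R) :
  psd rho -> psd X -> is_channel T0 -> (a%:E < measured_relent rho (T0 X))%E ->
  exists2 delta, 0 < delta & forall T, is_channel T -> channel_dist_lt delta T T0 ->
    (a%:E < measured_relent rho (T X))%E.
Proof.
move=> rho_psd X_psd T0_chan /ereal_sup_gt [_ [k [M [M_povm ->]]]].
have M_psd : forall x, psd (M x) by case: M_povm.
have TX_psd T : is_channel T -> psd (T X) by move/channel_psd; apply.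
have born_TX_ge0 T : is_channel T -> forall x, 0 <= born M (T X) x.
  by move=> T_chan x; apply/born_ge0/TX_psd.
rewrite relent_meas_channel //; last exact: TX_psd.
case/(crelent_lsc (fun x => born_ge0 M_psd x rho_psd) (born_TX_ge0 _ T0_chan)).
move=> d d_gt0 dP.
have [delta delta_gt0 near] := born_channel_near M_psd X_psd T0_chan d_gt0.
exists delta => // T T_chan close.
apply: lt_le_trans (ereal_sup_ubound _); last by exists k, M; split.
rewrite relent_meas_channel //; last exact: TX_psd.
by apply: dP => [|x]; [exact: born_TX_ge0 | exact: near].
Qed.

Lemma lteBBl_EFin (r s c : R) (D : \bar R) :
  ((r%:E - s%:E - D < c%:E) = ((r - s - c)%:E < D))%E.
Proof. by case: D => [t||] //=; rewrite ?ltry ?ltNyr // -!EFinB !lte_fin; lra. Qed.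

Theorem lemma7 (dA dB : nat) (sigma rho : 'M[C]_dA)
    (N : 'M[C]_dA -> 'M[C]_dB) :
  density sigma -> density rho -> supp_le rho sigma -> is_channel N ->
  usc_on_channels (fun T : 'M[C]_dB -> 'M[C]_dA => Delta T sigma N rho).
Proof.
move=> [sigma_psd _] [rho_psd _] supp_rs N_chan T0 T0_chan c.
rewrite /Delta.
have [r ->] : exists r : R, relent rho sigma = r%:E by rewrite /relent supp_rs; eexists.
case E : (relent (N rho) (N sigma)) => [s| |].
- move=> Delta_lt.
  have MD_gt : ((r - s - c)%:E < measured_relent rho (T0 (N rho)))%E.
    by rewrite -lteBBl_EFin.
  have [delta delta_gt0 near] :=
    measured_relent_lsc rho_psd (channel_psd N_chan rho_psd) T0_chan MD_gt.
  exists delta; first exact: delta_gt0.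
  by move=> T T_chan close; rewrite lteBBl_EFin; apply: near.
- by move=> _; exists 1; [exact: ltr01 | move=> T _ _; rewrite ltNyr].
- by move: E; rewrite /relent; case: ifP.
Qed.
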